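(* Let $d$ be a positive integer and let $l,m>90d$ be integers such that $lm$ is even. There is a directed Hamiltonian cycle $c_{l,m}$ on the rectangle $[1,l]\times[1,m]\subseteq\mathbb{Z}^2$ (with adjacency given by unit vectors) with the following features: (1) the cycle traverses, in the clockwise direction, all the edges of the boundary of the rectangle except one; (2) every edge of the cycle at distance greater than $4$ from the boundary of the rectangle is traversed in the direction $\epsilon^1$ if it lies at even distance from the top row $[1,l]\times\{m\}$, and in the direction $-\epsilon^1$ if it lies at odd distance from the top row.
   Context: A directed Hamiltonian cycle on a finite set $V\subseteq\mathbb{Z}^2$ is a cyclic ordering of all vertices of $V$ in which consecutive vertices differ by a unit vector $\pm\epsilon^1,\pm\epsilon^2$, with edges directed from each vertex to its successor. $\epsilon^1=(1,0)$, $\epsilon^2=(0,1)$; ''clockwise'' refers to the standard orientation of the plane with $\epsilon^2$ pointing up, and the boundary of the rectangle is the cycle formed by its outermost vertices. *)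

(* Lattice points are pairs of integers (x, y), with
   eps1 = (1,0) and eps2 = (0,1) pointing up. *)
From mathcomp Require Import all_boot all_order all_algebra.
Set Implicit Arguments. Unset Strict Implicit. Unset Printing Implicit Defensive.
Import Order.TTheory GRing.Theory Num.Theory.
Local Open Scope ring_scope.

Definition pt := (int * int)%type.

Definition adjacent (u v : pt) : bool :=
  `|v.1 - u.1| + `|v.2 - u.2| == 1.

Definition in_rect (l m : nat) (p : pt) : bool :=
  (1 <= p.1 <= l%:Z) && (1 <= p.2 <= m%:Z).

(* a directed Hamiltonian cycle on the rectangle, given as the cyclic
   sequence of its vertices (edges go from each vertex to its successor,
   the last vertex to the first) *)
Definition ham_cycle (l m : nat) (c : seq pt) : Prop :=
  [/\ uniq c, (forall p, (p \in c) = in_rect l m p) & cycle adjacent c].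

Definition cyc_edge (c : seq pt) (u v : pt) : bool :=
  (u \in c) && (next c u == v).

Definition bd_cw_edge (l m : nat) (u v : pt) : bool :=
  [&& in_rect l m u, in_rect l m v &
   [|| (u.2 == m%:Z) && (v == (u.1 + 1, u.2)),
       (u.1 == l%:Z) && (v == (u.1, u.2 - 1)),
       (u.2 == 1) && (v == (u.1 - 1, u.2)) |
       (u.1 == 1) && (v == (u.1, u.2 + 1))]].

Definition dist_bd (l m : nat) (p : pt) : int :=
  Num.min (Num.min (p.1 - 1) (l%:Z - p.1)) (Num.min (p.2 - 1) (m%:Z - p.2)).

Definition edge_dist_bd (l m : nat) (u v : pt) : int :=
  Num.min (dist_bd l m u) (dist_bd l m v).

Definition feature1 (l m : nat) (c : seq pt) : Prop :=
  exists u0 v0 : pt,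
    [/\ bd_cw_edge l m u0 v0, ~~ cyc_edge c u0 v0 &
        forall u v, bd_cw_edge l m u v -> (u, v) <> (u0, v0) -> cyc_edge c u v].

Definition feature2 (l m : nat) (c : seq pt) : Prop :=
  forall u v, cyc_edge c u v -> 4 < edge_dist_bd l m u v ->
    if ~~ odd `|m%:Z - u.2|%N then v = (u.1 + 1, u.2) else v = (u.1 - 1, u.2).

From mathcomp Require Import all_boot all_order all_algebra zify.
Set Implicit Arguments.
Unset Strict Implicit.
Unset Printing Implicit Defensive.
Import Order.TTheory GRing.Theory Num.Theory.
Local Open Scope ring_scope.

(* The cycle starts at (1, m-1), runs clockwise along the whole boundary up
   to (1, m-2), steps right to (2, m-2) and descends column 2 to (2, 2).  It
   then sweeps the block [3, l-1] x [2, m-1] row by row from the bottom up,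
   rightwards in the rows at even distance from the top and leftwards in the
   others, and returns to its start from (2, m-1).  The sweep must leave row 2
   rightwards, so when m is odd rows 3 and 4 are instead covered together by a
   vertical zigzag running leftwards, which ends in column 3 because l - 3 is
   odd (l is even as lm is).  Hamiltonicity is certified by the position of
   each point along the cycle, an explicit piecewise linear function which the
   successor map increases by one at every step. *)

Section RankedCycle.
Variables (T : eqType) (f : T -> T) (rank : T -> int) (s : seq T) (x0 x1 : T).
Hypotheses (s_uniq : uniq s) (x0_in : x0 \in s) (x1_in : x1 \in s)
  (f_in : {in s, forall x, f x \in s})
  (rank_x0 : rank x0 = 0) (rank_x1 : rank x1 = (size s)%:Z - 1)
  (rank_f : {in s, forall x, x != x1 -> rank (f x) = rank x + 1})
  (f_x1 : f x1 = x0).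

Lemma rank_iter k : (k < size s)%N -> iter k f x0 \in s /\ rank (iter k f x0) = k%:Z.
Proof.
elim: k => [|k IHk] lt_k_s; first by [].
have [xk_in rank_xk] := IHk (ltnW lt_k_s).
have xk_neq : iter k f x0 != x1.
  by apply: contraTneq lt_k_s => xk_eq; move: rank_x1; rewrite -xk_eq rank_xk; lia.
by rewrite iterS f_in // rank_f // rank_xk; split; last lia.
Qed.

Lemma ranked_traject_cycle (c := traject f x0 (size s)) :
  [/\ uniq c, c =i s & fcycle f c].
Proof.
have map_rank_c : map rank c = map Posz (iota 0 (size s)).
  apply: (@eq_from_nth _ 0) => [|i]; first by rewrite !size_map size_traject size_iota.
  rewrite size_map size_traject => lt_i_s.
  rewrite (nth_map x0) ?size_traject // nth_traject // (nth_map 0%N) ?size_iota //.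
  by rewrite nth_iota // add0n; case: (rank_iter lt_i_s).
have c_uniq : uniq c.
  by apply: (@map_uniq _ _ rank); rewrite map_rank_c map_inj_uniq ?iota_uniq // => ? ? [].
have c_sub : {subset c <= s} by move=> _ /trajectP[i lt_i_s ->]; case: (rank_iter lt_i_s).
have [_ c_eq_s] := uniq_min_size c_uniq c_sub (eq_leq (esym (size_traject _ _ _))).
split=> //.
have /trajectP[i lt_i_s x1_eq] : x1 \in c by rewrite c_eq_s.
have [_] := rank_iter lt_i_s; rewrite -x1_eq rank_x1 => rank_i.
have size_s : size s = i.+1 by lia.
by rewrite /c size_s /= rcons_path fpath_traject /= last_traject -x1_eq f_x1.
Qed.

End RankedCycle.

Lemma cyc_edge_fcycle (f : pt -> pt) (c : seq pt) u v :
  fcycle f c -> cyc_edge c u v = (u \in c) && (f u == v).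
Proof.
move=> c_cycle; rewrite /cyc_edge; case u_in: (u \in c) => //=.
by have /eqP -> := next_cycle c_cycle u_in.
Qed.

Definition rect_points (l m : nat) : seq pt :=
  [seq (i%:Z, j%:Z) | i <- iota 1 l, j <- iota 1 m].

Lemma rect_points_uniq l m : uniq (rect_points l m).
Proof. by apply: allpairs_uniq; rewrite ?iota_uniq // => -[? ?] [? ?] _ _ [-> ->]. Qed.

Lemma size_rect_points l m : size (rect_points l m) = (l * m)%N.
Proof. by rewrite size_allpairs !size_iota. Qed.

Lemma mem_rect_points l m p : (p \in rect_points l m) = in_rect l m p.
Proof.
apply/allpairsP/idP => [[[i j]] /= [+ + ->]|].
  by rewrite !mem_iota /in_rect /=; lia.
case: p => x y; rewrite /in_rect /= => xy_in; exists (`|x|%N, `|y|%N).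
by rewrite /= !mem_iota; split; [lia | lia | congr (_, _); lia].
Qed.

Ltac case_ifs :=
  repeat match goal with |- context [if ?b then _ else _] =>
    first [ rewrite (_ : b = false); last by lia
          | rewrite (_ : b = true); last by lia
          | let hb := fresh "hb" in
            case: (boolP b) => hb; try (move/eqP: hb => hb; subst) ]
  end.

Section Snake.
Variables l m : nat.
Hypotheses (l_gt3 : (3 < l)%N) (m_gt5 : (5 < m)%N) (l_even : odd m -> ~~ odd l).
Local Notation L := l%:Z.
Local Notation M := m%:Z.

Definition snake_next (p : pt) : pt :=
  let: (x, y) := p in
  if y == M then (if x < L then (x + 1, y) else (x, y - 1))
  else if x == L then (if 1 < y then (x, y - 1) else (x - 1, y))
  else if y == 1 then (if 1 < x then (x - 1, y) else (x, y + 1))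
  else if x == 1 then (if y == M - 2 then (2, y) else (x, y + 1))
  else if x == 2 then
    (if y == M - 1 then (1, y) else if y == 2 then (3, y) else (x, y - 1))
  else if odd m && (y <= 4) then
    (if y == 2 then (if x < L - 1 then (x + 1, y) else (x, y + 1))
     else if ~~ odd `|(L - 1 - x)%R|%N then
       (if y == 3 then (x, 4) else if x == 3 then (x, 5) else (x - 1, y))
     else (if y == 4 then (x, 3) else (x - 1, y)))
  else if ~~ odd `|(M - y)%R|%N then (if x < L - 1 then (x + 1, y) else (x, y + 1))
  else (if 3 < x then (x - 1, y) else if y == M - 1 then (2, y) else (x, y + 1)).

Definition snake_rank (p : pt) : int :=
  let: (x, y) := p in
  (* K0 and K1 are the positions of (2, m-2) and (3, 2); W is the width of
     the swept block. *)
  let K0 := 2 * L + 2 * M - 4 in let K1 := K0 + M - 3 in let W := L - 3 in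
  if y == M then x
  else if x == L then L + M - y
  else if y == 1 then 2 * L + M - 1 - x
  else if x == 1 then (if y == M - 1 then 0 else 2 * L + M - 3 + y)
  else if x == 2 then (if y == M - 1 then K1 + (M - 2) * W else K0 + M - 2 - y)
  else if odd m && (y <= 4) then
    (if y == 2 then K1 + x - 3
     else K1 + W + 2 * (L - 1 - x) +
       (if ~~ odd `|(L - 1 - x)%R|%N then (y != 3)%:Z else (y != 4)%:Z))
  else K1 + (y - 2) * W + (if ~~ odd `|(M - y)%R|%N then x - 3 else L - 1 - x).

Lemma snake_rank_next p : in_rect l m p -> p != (2, M - 1) ->
  snake_rank (snake_next p) = snake_rank p + 1.
Proof.
case: p => x y; rewrite /in_rect /= => /andP[/andP[? ?] /andP[? ?]] p_neq.
rewrite /snake_next; case_ifs; rewrite /snake_rank; case_ifs; try by rewrite eqxx in p_neq.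
all: lia.
Qed.

Lemma snake_next_in_rect p : in_rect l m p -> in_rect l m (snake_next p).
Proof.
case: p => x y; rewrite /in_rect /= => /andP[/andP[? ?] /andP[? ?]].
by rewrite /snake_next; case_ifs; rewrite /=; lia.
Qed.

Lemma snake_next_adjacent p : in_rect l m p -> adjacent p (snake_next p).
Proof.
case: p => x y; rewrite /in_rect /adjacent /= => /andP[/andP[? ?] /andP[? ?]].
by rewrite /snake_next; case_ifs; rewrite /=; lia.
Qed.

Lemma snake_next_last : snake_next (2, M - 1) = (1, M - 1).
Proof. by rewrite /snake_next; case_ifs. Qed.

Lemma snake_rank_first : snake_rank (1, M - 1) = 0.
Proof. by rewrite /snake_rank; case_ifs. Qed.

Lemma snake_rank_last : snake_rank (2, M - 1) = (l * m)%N%:Z - 1.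
Proof. rewrite /snake_rank; case_ifs; lia. Qed.

Lemma snake_next_skip : snake_next (1, M - 2) = (2, M - 2).
Proof. by rewrite /snake_next; case_ifs. Qed.

Lemma snake_next_boundary u v : bd_cw_edge l m u v ->
  (u, v) <> ((1, M - 2), (1, M - 1)) -> snake_next u = v.
Proof.
move=> + /eqP; case: u v => x y [a b].
rewrite /bd_cw_edge /in_rect /= !xpair_eqE => uv_bd uv_neq.
by rewrite /snake_next; case_ifs; apply/eqP; rewrite xpair_eqE; lia.
Qed.

Lemma snake_next_deep p : in_rect l m p -> 4 < edge_dist_bd l m p (snake_next p) ->
  snake_next p = if ~~ odd `|M - p.2|%N then (p.1 + 1, p.2) else (p.1 - 1, p.2).
Proof.
case: p => x y; rewrite /in_rect /edge_dist_bd /dist_bd /=.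
move=> /andP[/andP[? ?] /andP[? ?]].
by rewrite /snake_next; case_ifs; rewrite /= => ?; apply/eqP; rewrite xpair_eqE; lia.
Qed.

Lemma snake_traject_cycle (c := traject snake_next (1, M - 1) (l * m)) :
  [/\ uniq c, c =i rect_points l m & fcycle snake_next c].
Proof.
rewrite /c -(size_rect_points l m).
apply: ranked_traject_cycle (rect_points_uniq l m) _ _ _ snake_rank_first _ _
  snake_next_last.
- by rewrite mem_rect_points /in_rect /=; lia.
- by rewrite mem_rect_points /in_rect /=; lia.
- by move=> p; rewrite !mem_rect_points; apply: snake_next_in_rect.
- by rewrite size_rect_points snake_rank_last.
- by move=> p; rewrite mem_rect_points; apply: snake_rank_next.
Qed.

End Snake.

Theorem lemma12p3 (d l m : nat) :
  (0 < d)%N -> (90 * d < l)%N -> (90 * d < m)%N -> ~~ odd (l * m) ->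
  exists c : seq pt, [/\ ham_cycle l m c, feature1 l m c & feature2 l m c].
Proof.
move=> d_gt0 l_big m_big lm_even.
have l_gt3 : (3 < l)%N by lia.
have m_gt5 : (5 < m)%N by lia.
have l_even : odd m -> ~~ odd l by move: lm_even; rewrite oddM; case: (odd l); case: (odd m).
have [c_uniq c_mem c_cycle] := snake_traject_cycle l_gt3 m_gt5 l_even.
set c := traject _ _ _ in c_uniq c_mem c_cycle.
have c_edge u v : cyc_edge c u v = in_rect l m u && (snake_next l m u == v).
  by rewrite (cyc_edge_fcycle u v c_cycle) c_mem mem_rect_points.
exists c; split.
- split=> // [p|]; first by rewrite c_mem mem_rect_points.
  apply: (sub_in_cycle (P := in_rect l m)) c_cycle.
    by move=> u v u_in _ /eqP <-; apply: snake_next_adjacent.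
  by apply/allP => p; rewrite c_mem mem_rect_points.
- exists (1, m%:Z - 2), (1, m%:Z - 1); split.
  + by rewrite /bd_cw_edge /in_rect /= !xpair_eqE; lia.
  + by rewrite c_edge snake_next_skip // !xpair_eqE; lia.
  + move=> u v uv_bd uv_neq; have [u_in _ _] := and3P uv_bd.
    by rewrite c_edge u_in (snake_next_boundary l_gt3 m_gt5 l_even uv_bd uv_neq) eqxx.
- move=> u v; rewrite c_edge => /andP[u_in /eqP <-] deep.
  by rewrite snake_next_deep //; case: ifP => ->.
Qed.
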